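(* Let $\mathcal C$ be an essentially small additive category with cofibrations and $w$ an admissible class of morphisms in $\mathcal C$ such that $(\mathcal C,w)$ satisfies the factorization axiom. Then: (1) The class $w_{\mathrm{st}}|_{F_{wb}\mathcal C}$ of stable weak equivalences between weakly bounded filtered objects is the smallest admissible class of morphisms in $F_{wb}\mathcal C$ containing $lw|_{F_{wb}\mathcal C}$ and $\Theta_{F_{wb}\mathcal C}$. (2) $F_{wb}\mathcal C$ is the smallest $w_{\mathrm{st}}$-Serre subcategory of $F\mathcal C$ containing $\mathfrak j(\mathcal C)$. (3) For every morphism $f\colon x\to y$ in $F_{wb}\mathcal C$ with $x\in F_b\mathcal C$, there exists a factorization $f=p_f\circ i_f$ with $i_f\colon x\rightarrowtail u_f$ a level cofibration, $p_f\colon u_f\to y$ a stable weak equivalence, and $u_f\in F_b\mathcal C$.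
   Context: Admissible class: contains all isomorphisms, satisfies two-out-of-three, and for any commutative diagram of cofibration sequences with vertical maps $a,b,c$, two of $a,b,c$ in it implies the third is. Factorization axiom: every morphism factors as a cofibration followed by a morphism in $w$. $F\mathcal C$: functors $\mathbb N\to\mathcal C$ with $x_n=x(n)$, $i^x_n=x(n\le n+1)$, cofibrations = level cofibrations; $lw$ = level weak equivalences ($f_n\in w$ for all $n$); $w_{\mathrm{st}}$ = stable weak equivalences ($f_n\in w$ for all $n\ge N$ for some $N$). $x$ has amplitude in $[a,b]$ if $x_k=0$ for $k<a$ and $x_k=x_b$, $i^x_k=\mathrm{id}$ for $k\ge b$; $F_b\mathcal C$ = objects with amplitude in some $[a,b]$. $x$ is weakly bounded if there is $N$ with $i^x_n\in w$ for all $n\ge N$; $F_{wb}\mathcal C$ is the full subcategory of these. $\mathfrak j(x)$ is the constant filtered object at $x\in\mathcal C$ with identity transition maps; $\mathfrak j(\mathcal C)$ its image. The shift $x[1]$ has $x[1]_k=x_{k+1}$, $i^{x[1]}_k=i^x_{k+1}$; $\theta_x\colon x\to x[1]$ has components $(\theta_x)_k=i^x_k$; for a full subcategory $\mathcal D$ closed under shift, $\Theta_{\mathcal D}=\{\theta_x\}_{x\in\mathcal D}$. A $w_{\mathrm{st}}$-Serre subcategory of $F\mathcal C$ is a full subcategory such that for every level cofibration sequence two of $x,y,y/x$ in it implies the third is, and which is closed under finite zig-zags of stable weak equivalences. *)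

From Stdlib Require Import Relations Relation_Operators.

Set Implicit Arguments.
Unset Strict Implicit.

Record Cat := {
  Ob :> Type;
  Hom : Ob -> Ob -> Type;
  idm : forall x, Hom x x;
  cmp : forall x y z, Hom y z -> Hom x y -> Hom x z;
  cmp_assoc : forall x y z t (h : Hom z t) (g : Hom y z) (f : Hom x y),
      cmp h (cmp g f) = cmp (cmp h g) f;
  cmp_idl : forall x y (f : Hom x y), cmp (idm y) f = f;
  cmp_idr : forall x y (f : Hom x y), cmp f (idm x) = f
}.
Arguments Hom {c} x y.
Arguments idm {c} x.
Arguments cmp {c x y z} g f.

Definition is_iso {C : Cat} {x y : C} (f : Hom x y) : Prop :=
  exists g : Hom y x, cmp g f = idm x /\ cmp f g = idm y.

Definition is_pushout {C : Cat} {a b c d : C}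
  (f : Hom a b) (g : Hom a c) (h : Hom b d) (k : Hom c d) : Prop :=
  cmp h f = cmp k g /\
  forall (d' : C) (h' : Hom b d') (k' : Hom c d'), cmp h' f = cmp k' g ->
    exists u : Hom d d', (cmp u h = h' /\ cmp u k = k') /\
      forall v : Hom d d', cmp v h = h' -> cmp v k = k' -> v = u.

Record AddCofCat := {
  cat :> Cat;
  hadd : forall x y : cat, Hom x y -> Hom x y -> Hom x y;
  hzero : forall x y : cat, Hom x y;
  hopp : forall x y : cat, Hom x y -> Hom x y;
  hadd_assoc : forall x y (f g h : Hom x y),
      hadd f (hadd g h) = hadd (hadd f g) h;
  hadd_comm : forall x y (f g : Hom x y), hadd f g = hadd g f;
  hadd_0l : forall x y (f : Hom x y), hadd (hzero x y) f = f;
  hadd_Nl : forall x y (f : Hom x y), hadd (hopp f) f = hzero x y;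
  cmp_addl : forall x y z (g g' : Hom y z) (f : Hom x y),
      cmp (hadd g g') f = hadd (cmp g f) (cmp g' f);
  cmp_addr : forall x y z (g : Hom y z) (f f' : Hom x y),
      cmp g (hadd f f') = hadd (cmp g f) (cmp g f');
  zob : cat;
  zfrom : forall x : cat, Hom zob x;
  zto : forall x : cat, Hom x zob;
  zfrom_uniq : forall x (f : Hom zob x), f = zfrom x;
  zto_uniq : forall x (f : Hom x zob), f = zto x;
  biprod : forall x y : cat, exists (s : cat) (i1 : Hom x s) (i2 : Hom y s)
      (p1 : Hom s x) (p2 : Hom s y),
      cmp p1 i1 = idm x /\ cmp p2 i2 = idm y /\
      cmp p1 i2 = hzero y x /\ cmp p2 i1 = hzero x y /\
      hadd (cmp i1 p1) (cmp i2 p2) = idm s;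
  cof : forall x y : cat, Hom x y -> Prop;
  cof_iso : forall x y (f : Hom x y), is_iso f -> cof f;
  cof_cmp : forall x y z (g : Hom y z) (f : Hom x y), cof f -> cof g -> cof (cmp g f);
  cof_zero : forall x, cof (zfrom x);
  cof_pushout : forall a b c (f : Hom a b) (g : Hom a c), cof f ->
      exists (d : cat) (h : Hom b d) (k : Hom c d), is_pushout f g h k /\ cof k
}.
Arguments hzero {_} x y.
Arguments zfrom {_} x.
Arguments zto {_} x.
Arguments cof {_ x y} f.

Section InC.
Variable C : AddCofCat.

Definition is_zero (x : C) : Prop := is_iso (zto x).

(* cofibration sequence  x >--i--> y --p--> z  (z = y/x) *)
Definition cofseq {x y z : C} (i : Hom x y) (p : Hom y z) : Prop :=
  cof i /\ is_pushout i (zto x) p (zfrom z).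

Definition two_of_three (A B D : Prop) : Prop :=
  (A -> B -> D) /\ (A -> D -> B) /\ (B -> D -> A).

Definition MorClass := forall x y : C, Hom x y -> Prop.

Definition admissible (w : MorClass) : Prop :=
  (forall x y (f : Hom x y), is_iso f -> w x y f) /\
  (forall x y z (f : Hom x y) (g : Hom y z),
      two_of_three (w _ _ f) (w _ _ g) (w _ _ (cmp g f))) /\
  (forall x y z x' y' z' (i : Hom x y) (p : Hom y z) (i' : Hom x' y')
      (p' : Hom y' z') (a : Hom x x') (b : Hom y y') (c : Hom z z'),
      cofseq i p -> cofseq i' p' ->
      cmp b i = cmp i' a -> cmp c p = cmp p' b ->
      two_of_three (w _ _ a) (w _ _ b) (w _ _ c)).

Definition factorization_axiom (w : MorClass) : Prop :=
  forall x y (f : Hom x y), exists (u : C) (i : Hom x u) (p : Hom u y),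
    cof i /\ w _ _ p /\ cmp p i = f.

(* Filtered objects: functors N -> C, given by objects x_n and maps
   i_n : x_n -> x_{n+1}                                                 *)
Record Filt := { fo : nat -> C; fi : forall n, Hom (fo n) (fo (S n)) }.

Definition FMor (x y : Filt) := forall n, Hom (fo x n) (fo y n).

Definition natural {x y : Filt} (f : FMor x y) : Prop :=
  forall n, cmp (fi y n) (f n) = cmp (f (S n)) (fi x n).

Definition fcomp {x y z : Filt} (g : FMor y z) (f : FMor x y) : FMor x z :=
  fun n => cmp (g n) (f n).

Definition fiso {x y : Filt} (f : FMor x y) : Prop :=
  natural f /\ exists g : FMor y x, natural g /\
    forall n, cmp (g n) (f n) = idm _ /\ cmp (f n) (g n) = idm _.

Definition level_cof {x y : Filt} (f : FMor x y) : Prop :=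
  natural f /\ forall n, cof (f n).

Definition level_cofseq {x y z : Filt} (i : FMor x y) (p : FMor y z) : Prop :=
  natural i /\ natural p /\ forall n, cofseq (i n) (p n).

Definition FClass := forall x y : Filt, FMor x y -> Prop.

Variable w : MorClass.

Definition lw : FClass := fun x y f => forall n, w (f n).
Definition wst : FClass := fun x y f =>
  exists N, forall n, N <= n -> w (f n).

Definition amplitude_in (x : Filt) (a b : nat) : Prop :=
  (forall k, k < a -> is_zero (fo x k)) /\
  (forall k, b <= k -> fo x k = fo x b) /\
  (forall k, b <= k -> exists e : fo x k = fo x (S k),
      fi x k = eq_rect (fo x k) (fun t => Hom (fo x k) t) (idm (fo x k)) _ e).

Definition Fb (x : Filt) : Prop := exists a b, amplitude_in x a b.

Definition Fwb (x : Filt) : Prop :=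
  exists N, forall n, N <= n -> w (fi x n).

Definition jc (c : C) : Filt := {| fo := fun _ => c; fi := fun _ => idm c |}.

Definition shift (x : Filt) : Filt :=
  {| fo := fun k => fo x (S k); fi := fun k => fi x (S k) |}.

Definition theta (x : Filt) : FMor x (shift x) := fun k => fi x k.

Definition admissible_on (P : Filt -> Prop) (V : FClass) : Prop :=
  (forall x y (f : FMor x y), P x -> P y -> fiso f -> V x y f) /\
  (forall x y z (f : FMor x y) (g : FMor y z), P x -> P y -> P z ->
      natural f -> natural g ->
      two_of_three (V _ _ f) (V _ _ g) (V _ _ (fcomp g f))) /\
  (forall x y z x' y' z' (i : FMor x y) (p : FMor y z) (i' : FMor x' y')
      (p' : FMor y' z') (a : FMor x x') (b : FMor y y') (c : FMor z z'),
      P x -> P y -> P z -> P x' -> P y' -> P z' ->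
      level_cofseq i p -> level_cofseq i' p' ->
      natural a -> natural b -> natural c ->
      (forall n, cmp (b n) (i n) = cmp (i' n) (a n)) ->
      (forall n, cmp (c n) (p n) = cmp (p' n) (b n)) ->
      two_of_three (V _ _ a) (V _ _ b) (V _ _ c)).

Definition contains_lw_theta (P : Filt -> Prop) (V : FClass) : Prop :=
  (forall x y (f : FMor x y), P x -> P y -> natural f -> lw f -> V x y f) /\
  (forall x, P x -> V x (shift x) (theta x)).

Definition smallest_admissible_lw_theta (P : Filt -> Prop) (V : FClass) : Prop :=
  admissible_on P V /\ contains_lw_theta P V /\
  forall V' : FClass, admissible_on P V' -> contains_lw_theta P V' ->
    forall x y (f : FMor x y), P x -> P y -> natural f -> V x y f -> V' x y f.

Definition wst_rel (x y : Filt) : Prop := exists f : FMor x y, natural f /\ wst f.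
Definition zigzag : relation Filt := clos_refl_sym_trans Filt wst_rel.

Definition wst_Serre (D : Filt -> Prop) : Prop :=
  (forall x y z (i : FMor x y) (p : FMor y z), level_cofseq i p ->
      two_of_three (D x) (D y) (D z)) /\
  (forall x y, zigzag x y -> D x -> D y).

End InC.

Arguments cofseq {C x y z} i p.
Arguments FMor {C} x y.
Arguments natural {C x y} f.
Arguments fcomp {C x y z} g f.
Arguments level_cof {C x y} f.
Arguments level_cofseq {C x y z} i p.
Arguments fo {C} f n.
Arguments fi {C} f n.

From Stdlib Require Import Relation_Operators Lia PeanoNat FunctionalExtensionality
  ClassicalEpsilon Eqdep_dec.

Set Implicit Arguments.
Unset Strict Implicit.

(** Being a weak equivalence from some level on, and having transitions in [w]
    from some level on, are tail properties; hence (1) and the Serre property in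
    (2) follow levelwise from the admissibility of [w].
    Minimality in (1): by the square [theta_y o f = f[1] o theta_x], a class
    containing [lw] and [Theta] contains [f] as soon as it contains [f[1]], so
    induction on the level from which [f] lies in [w] ends in [lw].
    Minimality in (2): [theta_x : x -> x[1]] is a stable weak equivalence, so a
    weakly bounded [x] is zig-zag equivalent to a shift whose transitions all lie
    in [w]; that shift receives a levelwise weak equivalence from the constant
    object on its level [0].
    For (3), choose [B] past the amplitude of [x] and past the level from which
    the transitions of [y] lie in [w], factor [f_B] as [x_B >-> U -> y_B], and let
    [u] agree with [x] below [B] and be constantly [U] from [B] on. *)

Definition eventually (P : nat -> Prop) : Prop := exists N, forall n, N <= n -> P n.

Lemma eventually_S (P : nat -> Prop) : eventually P -> eventually (fun n => P (S n)).
Proof. intros [N HN]; exists N; intros n Hn; apply HN; lia. Qed.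

Lemma eventually_and2 (P Q R : nat -> Prop) :
  (forall n, P n -> Q n -> R n) -> eventually P -> eventually Q -> eventually R.
Proof.
  intros HPQR [N1 H1] [N2 H2]; exists (N1 + N2); intros n Hn.
  apply HPQR; [apply H1 | apply H2]; lia.
Qed.

Lemma eventually_two_of_three (P Q R : nat -> Prop) :
  (forall n, two_of_three (P n) (Q n) (R n)) ->
  two_of_three (eventually P) (eventually Q) (eventually R).
Proof.
  intro H; split; [|split]; apply eventually_and2; intro n; apply (H n).
Qed.

Section FromIndex.
Variables (T : nat -> Type) (B : nat) (t0 : T B) (step : forall k, T k -> T (S k)) (d0 : T 0).

(* The sequence starting with [t0] at index [B] and continued by [step];
   its values below [B] are junk. *)
Fixpoint from_index (k : nat) : T k :=
  match Nat.eq_dec k B with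
  | left e => eq_rect B T t0 k (eq_sym e)
  | right _ => match k return T k with
               | 0 => d0
               | S k' => step (from_index k')
               end
  end.

Lemma from_index_unfold k :
  from_index k = match Nat.eq_dec k B with
                 | left e => eq_rect B T t0 k (eq_sym e)
                 | right _ => match k return T k with
                              | 0 => d0
                              | S k' => step (from_index k')
                              end
                 end.
Proof. destruct k; reflexivity. Qed.

Lemma from_index_B : from_index B = t0.
Proof.
  rewrite from_index_unfold; destruct (Nat.eq_dec B B) as [e|]; [|congruence].
  rewrite (UIP_refl_nat _ e); reflexivity.
Qed.

Lemma from_index_S k : B <= k -> from_index (S k) = step (from_index k).
Proof.
  intro Hk; rewrite from_index_unfold; destruct (Nat.eq_dec (S k) B); [lia | reflexivity].
Qed.

End FromIndex.

Section AdditiveCofCat.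
Variable C : AddCofCat.

Lemma is_iso_idm (x : C) : is_iso (idm x).
Proof. exists (idm x); split; apply cmp_idl. Qed.

Lemma is_iso_eq_rect (a b : C) (e : a = b) :
  is_iso (eq_rect a (fun t => Hom a t) (idm a) b e).
Proof. destruct e; apply is_iso_idm. Qed.

Lemma amplitude_fi_iso (x : Filt C) a b :
  amplitude_in x a b -> forall k, b <= k -> is_iso (fi x k).
Proof.
  intros [_ [_ Hfi]] k Hk; destruct (Hfi k Hk) as [e ->]; apply is_iso_eq_rect.
Qed.

Definition inv_of {a b : C} (g : Hom a b) : Hom b a :=
  epsilon (inhabits (hzero b a)) (fun h => cmp h g = idm a /\ cmp g h = idm b).

Lemma inv_ofK {a b : C} (g : Hom a b) :
  is_iso g -> cmp (inv_of g) g = idm a /\ cmp g (inv_of g) = idm b.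
Proof. exact (epsilon_spec _ _). Qed.

Section Gluing.
Variables (x y : Filt C) (f : FMor x y) (B : nat) (U : C)
  (g : forall k, Hom (fo x k) U) (h : forall k, Hom U (fo y k)).

Definition glue_fo k : C := if k <? B then fo x k else U.

Definition glue_fi k : Hom (glue_fo k) (glue_fo (S k)) :=
  match k <? B as b1 return Hom (if b1 then fo x k else U) (glue_fo (S k)) with
  | true => match S k <? B as b2 return Hom (fo x k) (if b2 then fo x (S k) else U) with
            | true => fi x k
            | false => cmp (g (S k)) (fi x k)
            end
  | false => match S k <? B as b2 return Hom U (if b2 then fo x (S k) else U) with
             | true => hzero _ _
             | false => idm U
             end
  end.

Definition glue : Filt C := {| fo := glue_fo; fi := glue_fi |}.

Definition glue_in : FMor x glue := fun k =>
  match k <? B as b return Hom (fo x k) (if b then fo x k else U) with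
  | true => idm _
  | false => g k
  end.

Definition glue_out : FMor glue y := fun k =>
  match k <? B as b return Hom (if b then fo x k else U) (fo y k) with
  | true => f k
  | false => h k
  end.

Lemma glue_amplitude : amplitude_in glue 0 B.
Proof.
  split; [|split].
  - intros k Hk; lia.
  - intros k Hk; simpl; unfold glue_fo.
    rewrite Nat.ltb_irrefl; destruct (Nat.ltb_ge k B) as [_ ->]; auto.
  - intros k Hk; simpl; unfold glue_fi, glue_fo.
    destruct (k <? B) eqn:E1; [apply Nat.ltb_lt in E1; lia|].
    destruct (S k <? B) eqn:E2; [apply Nat.ltb_lt in E2; lia|].
    exists eq_refl; reflexivity.
Qed.

Hypothesis g_natural : forall k, B <= k -> cmp (g (S k)) (fi x k) = g k.

Lemma glue_in_natural : natural glue_in.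
Proof.
  intro k; simpl; unfold glue_in, glue_fi, glue_fo.
  destruct (k <? B) eqn:E1; destruct (S k <? B) eqn:E2.
  - rewrite cmp_idl, cmp_idr; reflexivity.
  - apply cmp_idr.
  - apply Nat.ltb_lt in E2; apply Nat.ltb_ge in E1; lia.
  - apply Nat.ltb_ge in E1; rewrite cmp_idl; symmetry; auto.
Qed.

Lemma glue_in_level_cof : (forall k, B <= k -> cof (g k)) -> level_cof glue_in.
Proof.
  intro Hg; split; [exact glue_in_natural|]; intro k; simpl; unfold glue_in, glue_fo.
  destruct (k <? B) eqn:E; [apply cof_iso, is_iso_idm | apply Hg, Nat.ltb_ge, E].
Qed.

Hypothesis f_natural : natural f.
Hypothesis h_natural : forall k, B <= k -> h (S k) = cmp (fi y k) (h k).
Hypothesis hg_factor : forall k, B <= k -> cmp (h k) (g k) = f k.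

Lemma glue_out_natural : natural glue_out.
Proof.
  intro k; simpl; unfold glue_out, glue_fi, glue_fo.
  destruct (k <? B) eqn:E1; destruct (S k <? B) eqn:E2.
  - apply f_natural.
  - apply Nat.ltb_ge in E2.
    rewrite f_natural, cmp_assoc, hg_factor by assumption; reflexivity.
  - apply Nat.ltb_lt in E2; apply Nat.ltb_ge in E1; lia.
  - apply Nat.ltb_ge in E1; rewrite cmp_idr; symmetry; auto.
Qed.

Lemma glue_factor k : cmp (glue_out k) (glue_in k) = f k.
Proof.
  simpl; unfold glue_out, glue_in, glue_fo.
  destruct (k <? B) eqn:E; [apply cmp_idr | apply hg_factor, Nat.ltb_ge, E].
Qed.

Lemma glue_out_wst (w : MorClass C) : (forall k, B <= k -> w _ _ (h k)) -> wst w glue_out.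
Proof.
  intro Hh; exists B; intros k Hk; simpl; unfold glue_out, glue_fo.
  destruct (Nat.ltb_ge k B) as [_ ->]; auto.
Qed.

End Gluing.

Section WeakEquivalences.
Variable w : MorClass C.
Hypothesis Hadm : admissible w.

Lemma w_of_iso x y (f : Hom x y) : is_iso f -> w f.
Proof. apply (proj1 Hadm). Qed.

Lemma w_comp x y z (f : Hom x y) (g : Hom y z) : w f -> w g -> w (cmp g f).
Proof. apply (proj1 (proj1 (proj2 Hadm) x y z f g)). Qed.

Lemma w_cancel_r x y z (f : Hom x y) (g : Hom y z) : w f -> w (cmp g f) -> w g.
Proof. apply (proj1 (proj2 (proj1 (proj2 Hadm) x y z f g))). Qed.

Lemma w_cancel_l x y z (f : Hom x y) (g : Hom y z) : w g -> w (cmp g f) -> w f.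
Proof. apply (proj2 (proj2 (proj1 (proj2 Hadm) x y z f g))). Qed.

Lemma wst_admissible_on (P : Filt C -> Prop) : admissible_on P (wst w).
Proof.
  destruct Hadm as [_ [Hcomp Hseq]].
  split; [|split].
  - intros x y f _ _ [_ [g [_ Hgf]]]; exists 0; intros n _.
    apply w_of_iso; exists (g n); apply Hgf.
  - intros x y z f g _ _ _ _ _; apply eventually_two_of_three; intro n; apply Hcomp.
  - intros x y z x' y' z' i p i' p' a b c _ _ _ _ _ _ [_ [_ Hs]] [_ [_ Hs']] _ _ _
      Hbi Hcp.
    apply eventually_two_of_three; intro n; apply (Hseq _ _ _ _ _ _ (i n) (p n) (i' n) (p' n));
      auto.
Qed.

Definition shift_mor {x y : Filt C} (f : FMor x y) : FMor (shift x) (shift y) :=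
  fun n => f (S n).

Lemma shift_mor_natural {x y : Filt C} (f : FMor x y) : natural f -> natural (shift_mor f).
Proof. intros Hf n; apply Hf. Qed.

Lemma theta_natural (x : Filt C) : natural (theta x).
Proof. intro n; reflexivity. Qed.

Lemma theta_comm {x y : Filt C} (f : FMor x y) :
  natural f -> fcomp (shift_mor f) (theta x) = fcomp (theta y) f.
Proof. intro Hf; apply functional_extensionality_dep; intro n; symmetry; apply Hf. Qed.

Lemma Fwb_shift (x : Filt C) : Fwb w x -> Fwb w (shift x).
Proof. apply eventually_S. Qed.

Lemma wst_sub_admissible (V : FClass C) :
  admissible_on (Fwb w) V -> contains_lw_theta w (Fwb w) V ->
  forall N x y (f : FMor x y), Fwb w x -> Fwb w y -> natural f ->
    (forall n, N <= n -> w (f n)) -> V x y f.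
Proof.
  intros [_ [V23 _]] [Vlw Vtheta] N; induction N as [|N IH];
    intros x y f Hx Hy Hf Hw.
  - apply Vlw; auto; intro n; apply Hw; lia.
  - assert (Vsf : V _ _ (shift_mor f)).
    { apply IH; auto using Fwb_shift, shift_mor_natural.
      intros n Hn; apply Hw; lia. }
    assert (Vsq : V _ _ (fcomp (theta y) f)).
    { rewrite <- (theta_comm Hf).
      apply (proj1 (V23 _ _ _ _ _ Hx (Fwb_shift Hx) (Fwb_shift Hy) (theta_natural x)
                       (shift_mor_natural Hf))); auto. }
    apply (proj2 (proj2 (V23 _ _ _ _ _ Hx Hy (Fwb_shift Hy) Hf (theta_natural y)))); auto.
Qed.

Lemma wst_smallest_admissible : smallest_admissible_lw_theta w (Fwb w) (wst w).
Proof.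
  split; [apply wst_admissible_on|split; [split|]].
  - intros x y f _ _ _ Hf; exists 0; auto.
  - intros x Hx; exact Hx.
  - intros V HV HVc x y f Hx Hy Hf [N HN]; exact (wst_sub_admissible HV HVc Hx Hy Hf HN).
Qed.

Lemma Fwb_level_cofseq (x y z : Filt C) (i : FMor x y) (p : FMor y z) :
  level_cofseq i p -> two_of_three (Fwb w x) (Fwb w y) (Fwb w z).
Proof.
  intros [Hi [Hp Hs]]; apply eventually_two_of_three; intro n.
  apply (proj2 (proj2 Hadm) _ _ _ _ _ _ (i n) (p n) (i (S n)) (p (S n))); auto.
Qed.

Lemma wst_rel_Fwb (x y : Filt C) : wst_rel w x y -> (Fwb w x <-> Fwb w y).
Proof.
  intros [f [Hf Hwf]].
  assert (Hw2 : eventually (fun n => w (f n) /\ w (f (S n))))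
    by exact (eventually_and2 (fun n => @conj _ _) Hwf (eventually_S Hwf)).
  split; intro Hx; refine (eventually_and2 _ Hw2 Hx); intros n [Hfn HfSn] Hfi.
  - apply (w_cancel_r Hfn); rewrite Hf; apply w_comp; assumption.
  - apply (w_cancel_l HfSn); rewrite <- Hf; apply w_comp; assumption.
Qed.

Lemma zigzag_Fwb (x y : Filt C) : zigzag w x y -> (Fwb w x <-> Fwb w y).
Proof.
  induction 1; [apply wst_rel_Fwb; assumption | tauto | tauto | tauto].
Qed.

Lemma Fwb_wst_Serre : wst_Serre w (Fwb w).
Proof.
  split; [exact Fwb_level_cofseq|].
  intros x y Hxy; apply (zigzag_Fwb Hxy).
Qed.

Lemma Fwb_jc (c : C) : Fwb w (jc c).
Proof. exists 0; intros n _; apply w_of_iso, is_iso_idm. Qed.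

Fixpoint from_base (x : Filt C) (n : nat) : Hom (fo x 0) (fo x n) :=
  match n with 0 => idm _ | S n => cmp (fi x n) (from_base x n) end.

Lemma from_base_natural (x : Filt C) : natural (x := jc (fo x 0)) (from_base x).
Proof. intro n; symmetry; apply cmp_idr. Qed.

Lemma from_base_w (x : Filt C) :
  (forall n, w (fi x n)) -> forall n, w (from_base x n).
Proof.
  intros Hx n; induction n as [|n IH]; [apply w_of_iso, is_iso_idm | apply w_comp; auto].
Qed.

Lemma Fwb_zigzag_jc (x : Filt C) : Fwb w x -> exists c : C, zigzag w (jc c) x.
Proof.
  intros [N HN]; revert x HN; induction N as [|N IH]; intros x Hx.
  - exists (fo x 0); apply rst_step; exists (from_base x); split.
    + apply from_base_natural.
    + exists 0; intros n _; apply from_base_w; intro k; apply Hx; lia.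
  - destruct (IH (shift x)) as [c Hc]; [intros n Hn; apply Hx; lia|].
    exists c; apply rst_trans with (shift x); [exact Hc|].
    apply rst_sym, rst_step; exists (theta x); split; [apply theta_natural|].
    exists (S N); intros n Hn; apply Hx; lia.
Qed.

Lemma Fwb_smallest_wst_Serre (D : Filt C -> Prop) :
  wst_Serre w D -> (forall c : C, D (jc c)) -> forall x, Fwb w x -> D x.
Proof.
  intros [_ Dzigzag] Dj x Hx; destruct (Fwb_zigzag_jc Hx) as [c Hc].
  exact (Dzigzag _ _ Hc (Dj c)).
Qed.

Section Tails.
Variables (x y : Filt C) (f : FMor x y) (B : nat) (U : C)
  (iB : Hom (fo x B) U) (pB : Hom U (fo y B)).
Hypothesis x_stable : forall k, B <= k -> is_iso (fi x k).

Definition tail_in : forall k, Hom (fo x k) U :=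
  @from_index (fun k => Hom (fo x k) U) B iB (fun k t => cmp t (inv_of (fi x k))) (hzero _ _).

Definition tail_out : forall k, Hom U (fo y k) :=
  @from_index (fun k => Hom U (fo y k)) B pB (fun k t => cmp (fi y k) t) (hzero _ _).

Lemma tail_in_natural k : B <= k -> cmp (tail_in (S k)) (fi x k) = tail_in k.
Proof.
  intro Hk; unfold tail_in; rewrite from_index_S by exact Hk.
  rewrite <- cmp_assoc, (proj1 (inv_ofK (x_stable Hk))); apply cmp_idr.
Qed.

Lemma tail_out_natural k : B <= k -> tail_out (S k) = cmp (fi y k) (tail_out k).
Proof. apply (from_index_S (T := fun k => Hom U (fo y k))). Qed.

Lemma tail_in_cof : cof iB -> forall k, B <= k -> cof (tail_in k).
Proof.
  intros HiB k Hk; induction Hk as [|k Hk IH]; unfold tail_in.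
  - rewrite from_index_B; exact HiB.
  - rewrite from_index_S by exact Hk; apply cof_cmp; [apply cof_iso | exact IH].
    exists (fi x k); split; apply (inv_ofK (x_stable Hk)).
Qed.

Lemma tail_out_w : (forall k, B <= k -> w (fi y k)) -> w pB ->
  forall k, B <= k -> w (tail_out k).
Proof.
  intros Hy HpB k Hk; induction Hk as [|k Hk IH]; unfold tail_out.
  - rewrite from_index_B; exact HpB.
  - rewrite from_index_S by exact Hk; apply w_comp; auto.
Qed.

Lemma tail_factor : natural f -> cmp pB iB = f B ->
  forall k, B <= k -> cmp (tail_out k) (tail_in k) = f k.
Proof.
  intros Hf HpiB k Hk; induction Hk as [|k Hk IH].
  - unfold tail_out, tail_in; rewrite !from_index_B; exact HpiB.
  - rewrite tail_out_natural by exact Hk; unfold tail_in; rewrite from_index_S by exact Hk.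
    fold tail_in.
    rewrite <- cmp_assoc, (cmp_assoc (tail_out k)), IH, cmp_assoc, Hf, <- cmp_assoc.
    rewrite (proj2 (inv_ofK (x_stable Hk))); apply cmp_idr.
Qed.

End Tails.

Lemma bounded_factorization :
  factorization_axiom w ->
  forall (x y : Filt C) (f : FMor x y), Fwb w y -> Fb x -> natural f ->
  exists (u : Filt C) (i : FMor x u) (p : FMor u y),
    level_cof i /\ natural p /\ wst w p /\ Fb u /\ (forall n, cmp (p n) (i n) = f n).
Proof.
  intros Hfact x y f [M HyM] [a [b Hamp]] Hf.
  destruct (Hfact _ _ (f (b + M))) as [U [iB [pB [HiB [HpB HpiB]]]]].
  assert (Hxs : forall k, b + M <= k -> is_iso (fi x k))
    by (intros k Hk; apply (amplitude_fi_iso Hamp); lia).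
  assert (Hys : forall k, b + M <= k -> w (fi y k)) by (intros k Hk; apply HyM; lia).
  pose proof (tail_in_natural iB Hxs) as Hg.
  pose proof (tail_factor Hxs Hf HpiB) as Hhg.
  exists (glue (b + M) (tail_in iB)), (glue_in (b + M) (tail_in iB)),
    (glue_out f (b + M) (tail_in iB) (tail_out pB)).
  split; [apply glue_in_level_cof; auto using tail_in_cof|].
  split; [apply glue_out_natural; auto using tail_out_natural|].
  split; [apply glue_out_wst, tail_out_w; assumption|].
  split; [exists 0, (b + M); apply glue_amplitude|].
  apply glue_factor, Hhg.
Qed.

End WeakEquivalences.
End AdditiveCofCat.

Theorem lemma2p8 (C : AddCofCat) (w : MorClass C)
  (Hadm : admissible w) (Hfact : factorization_axiom w) :
  (* (1) *)
  smallest_admissible_lw_theta w (Fwb w) (wst w)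
  /\
  (* (2) *)
  (wst_Serre w (Fwb w) /\ (forall c : C, Fwb w (jc c)) /\
   forall D : Filt C -> Prop, wst_Serre w D -> (forall c : C, D (jc c)) ->
     forall x, Fwb w x -> D x)
  /\
  (* (3) *)
  (forall (x y : Filt C) (f : FMor x y), Fwb w x -> Fwb w y -> Fb x ->
     natural f ->
     exists (u : Filt C) (i : FMor x u) (p : FMor u y),
       level_cof i /\ natural p /\ wst w p /\ Fb u /\
       (forall n, cmp (p n) (i n) = f n)).
Proof.
  split; [exact (wst_smallest_admissible Hadm)|].
  split; [split; [exact (Fwb_wst_Serre Hadm)|split]|].
  - exact (Fwb_jc Hadm).
  - exact (Fwb_smallest_wst_Serre Hadm).
  - intros x y f _ Hy Hx Hf; exact (bounded_factorization Hadm Hfact Hy Hx Hf).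
Qed.
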